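(* Let $\Phi=\forall u_1\ldots\forall u_n\exists e_1(D_1)\ldots\exists e_m(D_m).\varphi$ be a DQBF with prefix $\mathcal{Q}$, let $A$ be a set of arbiter variables, let $\psi$ be a CNF with $\mathit{var}(\psi)\subseteq U\cup E\cup A$, let $\Psi=\mathcal{Q}\exists A(\emptyset).\psi$, let $\neg p\vee\ell$ be a forcing clause in $\psi$, and let $\Psi'=\mathcal{Q}\exists A(\emptyset).\psi\wedge(\neg p\vee\ell)$. Then $F$ is a model of $\Psi$ if and only if $F$ is a model of $\Psi'$.
   Context: For a set $V$ of variables, $[V]$ is the set of assignments $V\to\{\textsc{true},\textsc{false}\}$; assignments are identified with terms of the literals they make true, $\neg\sigma$ is the clause of the negations of these literals, and $\sigma|_W$ denotes restriction to (the part of the domain lying in) $W$. A DQBF is $\forall u_1\ldots\forall u_n\exists e_1(D_1)\ldots\exists e_m(D_m).\varphi$ with pairwise distinct variables, $U=\{u_i\}$, $E=\{e_j\}$, dependency sets $D(e_j)=D_j\subseteq U$, and $\varphi$ a CNF over $U\cup E$; a model is a family $F=(F_e)_{e}$ with $F_e:[D(e)]\to\{\textsc{true},\textsc{false}\}$ such that for every $\sigma\in[U]$, $\sigma\cup F(\sigma)$ satisfies the matrix, where $F(\sigma)$ assigns each existential $e$ the value $F_e(\sigma|_{D(e)})$. Arbiter variables are fresh variables $e^\sigma$ for $e\in E$, $\sigma\in[D(e)]$. For a set $A$ of them and a CNF $\psi$, $\mathcal{Q}\exists A(\emptyset).\psi$ is the DQBF whose prefix is that of $\Phi$ extended by every variable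 of $A$ as an existential variable with empty dependency set, and whose matrix is $\psi$. Forcing: let $\ell$ be a literal on a variable in $E$, $\psi$ a formula with $\mathit{var}(\psi)\subseteq U\cup E\cup A$, and $\sigma$ a partial assignment to $U\cup A$; $\ell$ is forced by $\sigma$ in $\psi$ if $\psi\wedge\sigma\wedge\neg\ell$ is unsatisfiable, and in that case $\neg(\sigma|_{D(\mathit{var}(\ell))\cup A})\vee\ell$ is called a forcing clause in $\psi$. *)

From mathcomp Require Import all_boot.
Set Implicit Arguments. Unset Strict Implicit. Unset Printing Implicit Defensive.

(* Variables of the extended DQBF: universals u_i (i : 'I_n), existentials
   e_j (j : 'I_m), and arbiter variables e_j^sigma, where an assignment
   sigma in [D(e_j)] is identified with the set S of universals of D(e_j)
   it maps to true (S \subset D j). *)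
Definition var (n m : nat) : finType := (('I_n + 'I_m) + ('I_m * {set 'I_n}))%type.

Definition uvar {n m} (i : 'I_n) : var n m := inl (inl i).
Definition evar {n m} (j : 'I_m) : var n m := inl (inr j).
Definition avar {n m} (a : 'I_m * {set 'I_n}) : var n m := inr a.

Definition lit n m := (var n m * bool)%type.
Definition clause n m := seq (lit n m).
Definition cnf n m := seq (clause n m).

Definition lit_true n m (al : var n m -> bool) (l : lit n m) : bool := al l.1 == l.2.
Definition clause_sat n m (al : var n m -> bool) (C : clause n m) : bool :=
  has (lit_true al) C.
Definition cnf_sat n m (al : var n m -> bool) (psi : cnf n m) : bool :=
  all (clause_sat al) psi.

Definition neg_lit n m (l : lit n m) : lit n m := (l.1, ~~ l.2).

Definition arbiter_set n m (D : 'I_m -> {set 'I_n}) (A : {set 'I_m * {set 'I_n}}) :=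
  forall a, a \in A -> a.2 \subset D a.1.

Definition in_UEA n m (A : {set 'I_m * {set 'I_n}}) (v : var n m) : bool :=
  match v with inl _ => true | inr a => a \in A end.
Definition in_UA n m (A : {set 'I_m * {set 'I_n}}) (v : var n m) : bool :=
  match v with inl (inl _) => true | inl (inr _) => false | inr a => a \in A end.
Definition is_evar n m (v : var n m) : bool :=
  match v with inl (inr _) => true | _ => false end.

Definition vars_within n m (A : {set 'I_m * {set 'I_n}}) (psi : cnf n m) :=
  forall C l, C \in psi -> l \in C -> in_UEA A l.1.

Definition pasg n m := var n m -> option bool.

Definition dom_in n m (P : pred (var n m)) (s : pasg n m) := forall v, s v <> None -> P v.

Definition restrict n m (s : pasg n m) (W : pred (var n m)) : pasg n m :=
  fun v => if W v then s v else None.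

Definition neg_term n m (s : pasg n m) : clause n m :=
  pmap (fun v => omap (fun b => (v, ~~ b)) (s v)) (enum (var n m)).

(* D(var l) \cup A, for l a literal on an existential variable *)
Definition dep_or_arb n m (D : 'I_m -> {set 'I_n}) (A : {set 'I_m * {set 'I_n}})
  (x : var n m) : pred (var n m) :=
  fun v => match v with
           | inl (inl i) => match x with inl (inr j) => i \in D j | _ => false end
           | inl (inr _) => false
           | inr a => a \in A
           end.

Definition forced n m (psi : cnf n m) (s : pasg n m) (l : lit n m) : Prop :=
  ~ exists al : var n m -> bool,
      [/\ cnf_sat al psi, (forall v b, s v = Some b -> al v = b) & lit_true al (neg_lit l)].

Definition forcing_clause n m (D : 'I_m -> {set 'I_n}) (A : {set 'I_m * {set 'I_n}})
  (psi : cnf n m) (p : pasg n m) (l : lit n m) : Prop :=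
  is_evar l.1 /\
  exists s : pasg n m, [/\ dom_in (in_UA A) s, forced psi s l &
                           p = restrict s (dep_or_arb D A l.1)].

(* Candidate model of Q exists A(emptyset). psi: F_e : [D(e)] -> bool for each
   existential (with [D(e)] identified with subsets of D(e)), and a constant
   for every arbiter variable (empty dependency set). *)
Record strategy n m := Strategy {
  FE : 'I_m -> {set 'I_n} -> bool;
  FA : 'I_m * {set 'I_n} -> bool }.

Definition extend n m (D : 'I_m -> {set 'I_n}) (F : strategy n m)
  (s : {ffun 'I_n -> bool}) : var n m -> bool :=
  fun v => match v with
           | inl (inl i) => s i
           | inl (inr j) => FE F j [set i in D j | s i]
           | inr a => FA F a
           end.

Definition is_model n m (D : 'I_m -> {set 'I_n}) (F : strategy n m) (psi : cnf n m) : Prop :=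
  forall s : {ffun 'I_n -> bool}, cnf_sat (extend D F s) psi.

From mathcomp Require Import all_boot.

Set Implicit Arguments. Unset Strict Implicit. Unset Printing Implicit Defensive.

(* If sigma \cup F(sigma) falsifies the clause ~p, it agrees with p.  Let s be
   the assignment to U \cup A that forces l, with p = s|_(D(var l) \cup A).
   Overwriting sigma by s on the universals gives sigma' with sigma' \cup
   F(sigma') agreeing with s (arbiters are constants and agree with p on A), so
   it satisfies psi and hence l.  But sigma and sigma' coincide on D(var l),
   where s and sigma both agree with p, so l is also true under
   sigma \cup F(sigma). *)

Section ForcingClause.

Variables (n m : nat) (D : 'I_m -> {set 'I_n}) (A : {set 'I_m * {set 'I_n}}).

Definition agrees (al : var n m -> bool) (s : pasg n m) : Prop :=
  forall v b, s v = Some b -> al v = b.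

Definition override (s' : pasg n m) (s : {ffun 'I_n -> bool}) : {ffun 'I_n -> bool} :=
  [ffun i => odflt (s i) (s' (uvar i))].

Lemma cnf_sat_rcons (al : var n m -> bool) (psi : cnf n m) (C : clause n m) :
  cnf_sat al (rcons psi C) = cnf_sat al psi && clause_sat al C.
Proof. by rewrite /cnf_sat all_rcons andbC. Qed.

Lemma mem_neg_term (p : pasg n m) v b : p v = Some b -> (v, ~~ b) \in neg_term p.
Proof.
move=> pv; rewrite mem_pmap.
have -> : Some (v, ~~ b) = omap (fun b => (v, ~~ b)) (p v) by rewrite pv.
by apply: (map_f (fun v => omap _ (p v))); rewrite mem_enum.
Qed.

Lemma agrees_neg_term_unsat (al : var n m -> bool) (p : pasg n m) :
  ~~ clause_sat al (neg_term p) -> agrees al p.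
Proof.
move=> unsat v b pv; apply/eqP; apply: contraNT unsat => al_v.
apply/hasP; exists (v, ~~ b); first exact: mem_neg_term.
by move: al_v; rewrite /lit_true /=; case: (al v); case: (b).
Qed.

Variables (F : strategy n m) (s' : pasg n m) (s : {ffun 'I_n -> bool}).

Lemma agrees_extend_override x :
  dom_in (in_UA A) s' ->
  agrees (extend D F s) (restrict s' (dep_or_arb D A x)) ->
  agrees (extend D F (override s' s)) s'.
Proof.
move=> dom_s' agree [[i|j]|a] b s'_v.
- by rewrite /= ffunE s'_v.
- have : s' (evar j) <> None by rewrite s'_v.
  by move/dom_s'.
- have a_in_A : a \in A by apply: (dom_s' (avar a)); rewrite s'_v.
  by apply: (agree (avar a)); rewrite /restrict /= a_in_A.
Qed.

Lemma extend_override_evar j :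
  agrees (extend D F s) (restrict s' (dep_or_arb D A (evar j))) ->
  extend D F (override s' s) (evar j) = extend D F s (evar j).
Proof.
move=> agree /=; congr FE; apply/setP => i; rewrite !inE ffunE.
case Dji: (i \in D j) => //=; case s'_i: (s' (uvar i)) => [b|] //=.
by symmetry; apply: (agree (uvar i)); rewrite /restrict /= Dji.
Qed.

End ForcingClause.

Lemma forcing_clause_sound n m (D : 'I_m -> {set 'I_n}) (A : {set 'I_m * {set 'I_n}})
    (psi : cnf n m) (p : pasg n m) (l : lit n m) (F : strategy n m)
    (s : {ffun 'I_n -> bool}) :
  forcing_clause D A psi p l -> is_model D F psi ->
  agrees (extend D F s) p -> lit_true (extend D F s) l.
Proof.
case: l => [[[i|j]|a] c] [//= _ [s' [dom_s' forced_l ->]]] model agree.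
apply/negPn/negP => l_false; apply: forced_l.
exists (extend D F (override s' s)); split.
- exact: model.
- exact: agrees_extend_override dom_s' agree.
- move: l_false; rewrite /lit_true /=.
  have /= -> := extend_override_evar agree.
  by case: (FE F j _); case: c.
Qed.

Theorem lemma9 (n m : nat) (D : 'I_m -> {set 'I_n})
  (A : {set 'I_m * {set 'I_n}}) (psi : cnf n m) (p : pasg n m) (l : lit n m)
  (F : strategy n m) :
  arbiter_set D A ->
  vars_within A psi ->
  forcing_clause D A psi p l ->
  is_model D F psi <-> is_model D F (rcons psi (rcons (neg_term p) l)).
Proof.
move=> _ _ forcing; split => model s; last first.
  by have := model s; rewrite cnf_sat_rcons => /andP[].
rewrite cnf_sat_rcons model /= /clause_sat has_rcons orbC.
have [//|unsat] := boolP (has (lit_true (extend D F s)) (neg_term p)).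
by rewrite (forcing_clause_sound forcing model (agrees_neg_term_unsat unsat)).
Qed.
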